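(* Let $\kappa$ be an infinite cardinal, $(G,f)\in\mathcal C$ with $G=(V,E)$ and $|V|=\kappa^+$. Then $G$ possesses a perfect $f$-factor if and only if there is an increasing continuous sequence $(A_\alpha)_{\alpha<\kappa^+}$ of subsets of $V$ such that (i) $A_0=\emptyset$ and $V=\bigcup_{\alpha<\kappa^+}A_\alpha$; (ii) $|A_{\alpha+1}\setminus A_\alpha|=\kappa$ for all $\alpha<\kappa^+$; (iii) for every $\alpha<\kappa^+$, letting $B_\alpha=A_{\alpha+1}\setminus(A_\alpha\setminus f^{-1}(\kappa^+))$ and $g_\alpha=f\restriction B_\alpha$, the graph $\bigl(B_\alpha,\{\{x,y\}\in E: x\in B_\alpha,\ y\in A_{\alpha+1}\setminus A_\alpha\}\bigr)$ has a $\kappa$-perfect $g_\alpha$-factor.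
   Context: A graph is $G=(V,E)$ with $V$ a nonempty set and $E\subseteq\{e\subseteq V:|e|=2\}$. For $F\subseteq E$ and $x\in V$, $d_F(x)$ is the cardinal $|\{e\in F:x\in e\}|$. For $f:V\to$ Cardinals, an $f$-factor of $G$ is $F\subseteq E$ with $d_F(x)\le f(x)$ for all $x$; it is perfect if $d_F(x)=f(x)$ for all $x$; $f^{-1}(\lambda)=\{x\in V:f(x)=\lambda\}$. For an infinite cardinal $\kappa$, an $f$-factor $F$ is $\kappa$-perfect if $d_F(x)=f(x)$ for all $x$ with $f(x)\le\kappa$ and $d_F(x)>0$ for all $x$ with $f(x)>\kappa$. $\mathcal C$ is the class of all pairs $(G,f)$ with $G=(V,E)$ a graph, $f:V\to$ Cardinals, and $f(x)\le d_E(x)$ for all $x\in V$. A sequence $(A_\alpha)_{\alpha<\kappa^+}$ is increasing continuous if $A_\alpha\subseteq A_\beta$ for $\alpha<\beta$ and $A_\lambda=\bigcup_{\alpha<\lambda}A_\alpha$ for limit $\lambda$. *)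

From mathcomp Require Import all_boot all_order.
From mathcomp Require Import boolp classical_sets functions cardinality.
Set Implicit Arguments. Unset Strict Implicit. Unset Printing Implicit Defensive.
Local Open Scope classical_set_scope.
Local Open Scope card_scope.

(* A cardinal is represented by a set (of any type); cardinals are compared
   with #<= and #= (existence of an injection / a bijection). *)

Definition is_edge (V : Type) (e : set V) := exists x y : V, x <> y /\ e = [set x; y].

Definition graph (V : Type) (E : set (set V)) :=
  (exists x : V, True) /\ forall e, E e -> is_edge e.

(* the set {e in F : x in e}; d_F(x) is its cardinal *)
Definition inc (V : Type) (F : set (set V)) (x : V) : set (set V) :=
  [set e | F e /\ e x].

Definition classC (V C : Type) (E : set (set V)) (f : V -> set C) :=
  graph E /\ forall x, f x #<= inc E x.

Definition factor (V C : Type) (B : set V) (E : set (set V)) (f : V -> set C)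
  (F : set (set V)) :=
  F `<=` E /\ forall x, B x -> inc F x #<= f x.

Definition perfect_factor (V C : Type) (B : set V) (E : set (set V))
  (f : V -> set C) (F : set (set V)) :=
  factor B E f F /\ forall x, B x -> inc F x #= f x.

(* kappa-perfect f-factor, kappa = |K| *)
Definition kperfect_factor (V C K : Type) (B : set V) (E : set (set V))
  (f : V -> set C) (F : set (set V)) :=
  factor B E f F /\
  forall x, B x ->
    (f x #<= [set: K] -> inc F x #= f x) /\
    (~ (f x #<= [set: K]) -> inc F x !=set0).

(* |L| = |K|^+ : K injects into L, L does not inject into K, and every subset
   of L has cardinality <= |K| or = |L|. *)
Definition is_succ_card (K L : Type) :=
  [set: K] #<= [set: L] /\ ~ ([set: L] #<= [set: K]) /\
  forall S : set L, S #<= [set: K] \/ S #= [set: L].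

Definition strict_wellorder (I : Type) (lt : I -> I -> Prop) :=
  (forall a, ~ lt a a) /\ (forall a b c, lt a b -> lt b c -> lt a c) /\
  (forall a b, lt a b \/ a = b \/ lt b a) /\ well_founded lt.

(* (I, lt) has order type the initial ordinal kappa^+ (= |L| where L is the
   successor cardinal of K): |I| = |L| and every proper initial segment has
   cardinality <= kappa. *)
Definition ordinal_succ_card (K L I : Type) (lt : I -> I -> Prop) :=
  strict_wellorder lt /\ [set: I] #= [set: L] /\
  forall i, [set j | lt j i] #<= [set: K].

Definition is_least (I : Type) (lt : I -> I -> Prop) (z : I) := forall a, a <> z -> lt z a.
Definition is_succ_of (I : Type) (lt : I -> I -> Prop) (a b : I) :=
  lt a b /\ forall c, lt a c -> c = b \/ lt b c.
Definition is_limit (I : Type) (lt : I -> I -> Prop) (l : I) :=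
  ~ is_least lt l /\ ~ (exists a, is_succ_of lt a l).

Definition increasing_continuous (V I : Type) (lt : I -> I -> Prop) (A : I -> set V) :=
  (forall a b, lt a b -> A a `<=` A b) /\
  (forall l, is_limit lt l -> A l = \bigcup_(a in [set a | lt a l]) A a).

From mathcomp Require Import all_boot all_order.
From mathcomp Require Import boolp classical_sets functions cardinality.
Set Implicit Arguments. Unset Strict Implicit. Unset Printing Implicit Defensive.
Local Open Scope classical_set_scope.
Local Open Scope card_scope.

(* Write k for |K|, so that |V| = k^+, and call x small when f x <= k.
   Given a perfect factor F, build the filtration by transfinite recursion: A_(a+1) is
   the closure of A_a, k new vertices and the a-th vertex under adding all F-neighbours
   of small vertices and one F-neighbour outside A_a of each big vertex.  Every stage has
   size k and is closed under F-neighbourhoods of small vertices, so the F-edges between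
   B_a and A_(a+1) \ A_a form a k-perfect factor.  Conversely the union of the stage
   factors is perfect: a small vertex only meets edges of the stage where it enters,
   while a big vertex meets a distinct edge at each of the k^+ later stages.
   The cardinal arithmetic (comparability, k * k = k) is proved from Zorn's lemma. *)

Lemma card_le_inj T U (A : set T) (B : set U) (f : T -> U) :
  set_fun A B f -> set_inj A f -> A #<= B.
Proof.
move=> fAB fi; rewrite -(card_le_eql (inj_card_eq fi)).
by apply: subset_card_le => _ [x Ax <-]; apply: fAB.
Qed.

Lemma card_le_injP T U (A : set T) (B : set U) :
  A #<= B <-> A = set0 \/ exists2 f : T -> U, set_fun A B f & set_inj A f.
Proof.
split; last by case=> [->|[f]]; [exact: card_ge0|exact: card_le_inj].
elim/Ppointed: U => U in B *; first by rewrite card_le_emptyr => /eqP; left.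
by move/pcard_leP/injfunPex => [f fAB fi]; right; exists f.
Qed.

Definition one_to_one T U (R : set (T * U)) :=
  forall p q, R p -> R q -> (p.1 = q.1 <-> p.2 = q.2).

(* A maximal one-to-one relation inside [A `*` B] is defined on all of [A] or onto [B]. *)
Lemma card_le_total T U (A : set T) (B : set U) : A #<= B \/ B #<= A.
Proof.
pose P R := R `<=` A `*` B /\ one_to_one R.
have [R [[RAB R11] Rmax]] : exists R, P R /\ forall R', R `<` R' -> ~ P R'.
  apply: Zorn_bigcup => F FP Ftot; split.
    by move=> p [R FR Rp]; apply: (FP R FR).1.
  move=> p q [R FR Rp] [R' FR' R'q].
  have [RR'|R'R] := Ftot _ _ FR FR'.
    exact: (FP R' FR').2 (RR' _ Rp) R'q.
  exact: (FP R FR).2 Rp (R'R _ R'q).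
have fst_inj : set_inj R fst.
  move=> [x y] [x' y'] /set_mem Rp /set_mem Rq /= exx'.
  by have /= <- := (R11 _ _ Rp Rq).1 exx'; rewrite exx'.
have snd_inj : set_inj R snd.
  move=> [x y] [x' y'] /set_mem Rp /set_mem Rq /= eyy'.
  by have /= <- := (R11 _ _ Rp Rq).2 eyy'; rewrite eyy'.
have fstR : fst @` R #= snd @` R.
  exact: card_eq_trans (inj_card_eq fst_inj) (card_esym (inj_card_eq snd_inj)).
have [AR|/nonsubset[a [Aa nRa]]] := pselect (A `<=` fst @` R).
  left; apply: card_le_trans (subset_card_le AR) _.
  rewrite (card_le_eql fstR); apply: subset_card_le => _ [p Rp <-].
  exact: (RAB p Rp).2.
have [BR|/nonsubset[b [Bb nRb]]] := pselect (B `<=` snd @` R).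
  right; apply: card_le_trans (subset_card_le BR) _.
  rewrite -(card_le_eql fstR); apply: subset_card_le => _ [p Rp <-].
  exact: (RAB p Rp).1.
exfalso; apply: (Rmax (R `|` [set (a, b)])).
  split; first by move=> p Rp; left.
  by move=> /(_ (a, b) (or_intror erefl)) Rab; apply: nRa; exists (a, b).
split; first by move=> p [/RAB //|->].
move=> p q [Rp|->] [Rq|->]; first exact: R11.
- by split=> e; [case: nRa|case: nRb]; exists p; rewrite // e.
- by split=> e; [case: nRa|case: nRb]; exists q; rewrite // e.
- by [].
Qed.

Section Pairing.
Variable K : Type.

Definition pairing_on (A : set K) (g : K -> K -> K) :=
  (forall x y, A x -> A y -> A (g x y)) /\
  (forall x y x' y', A x -> A y -> A x' -> A y' ->
     g x y = g x' y' -> x = x' /\ y = y').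

Section Extension.
Variables (A : set K) (g : K -> K -> K) (h : K -> K) (k1 k2 k3 : K).
Hypotheses (gA : pairing_on A g) (Ak1 : A k1) (Ak2 : A k2) (Ak3 : A k3).
Hypotheses (k12 : k1 <> k2) (k13 : k1 <> k3) (k23 : k2 <> k3).
Hypotheses (hA : set_fun A (~` A) h) (hi : set_inj A h).

Let A' := A `|` h @` A.
Let hinv := 'pinv_(fun=> k1) A h.

Let hinvK x : A x -> hinv (h x) = x.
Proof. by move=> Ax; have /= := pinvKV (fun=> k1) hi (mem_set Ax). Qed.

Let retract u := if `[< A u >] then u else hinv u.

Let retractA u : A' u -> A (retract u).
Proof.
rewrite /retract; case: (pselect (A u)) => [Au _|nAu [//|[x Ax <-]]].
  by rewrite asboolT.
by rewrite asboolF ?hinvK //; apply: hA.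
Qed.

Let retract_inj u u' : A' u -> A' u' -> `[< A u >] = `[< A u' >] ->
  retract u = retract u' -> u = u'.
Proof.
move=> A'u A'u' eA; rewrite /retract -eA.
have [Au|nAu] := pselect (A u); first by rewrite asboolT.
have nAu' : ~ A u' by move/asboolT; rewrite -eA asboolF.
rewrite asboolF //; case: A'u => [//|[x Ax <-]]; case: A'u' => [//|[x' Ax' <-]].
by rewrite !hinvK // => ->.
Qed.

Let tag (b1 b2 : bool) := if b1 then k1 else if b2 then k2 else k3.

Let tag_inj b1 b2 b1' b2' : ~~ (b1 && b2) -> ~~ (b1' && b2') ->
  tag b1 b2 = tag b1' b2' -> b1 = b1' /\ b2 = b2'.
Proof.
by rewrite /tag; case: b1; case: b2; case: b1'; case: b2' => //= _ _ e;
  exfalso; move: e; apply/nesym || apply.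
Qed.

Let tagA b1 b2 : A (tag b1 b2).
Proof. by rewrite /tag; case: b1; case: b2. Qed.

(* A pair of points of [A'] not both in [A] is coded in [A] by the retractions of its
   entries and a tag telling which entries lie in [A]; [h] then sends the code out of [A]. *)
Let code x y := g (g (retract x) (retract y)) (tag `[< A x >] `[< A y >]).

Let codeA x y : A' x -> A' y -> A (code x y).
Proof. by move=> A'x A'y; apply: gA.1 (tagA _ _); apply: gA.1; apply: retractA. Qed.

Let code_inj x y x' y' : A' x -> A' y -> A' x' -> A' y' ->
  ~~ (`[< A x >] && `[< A y >]) -> ~~ (`[< A x' >] && `[< A y' >]) ->
  code x y = code x' y' -> x = x' /\ y = y'.
Proof.
move=> A'x A'y A'x' A'y' nxy nxy' e.
have rA := retractA; have [gAA ginj] := gA.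
have [/(ginj _ _ _ _ (rA _ A'x) (rA _ A'y) (rA _ A'x') (rA _ A'y')) [ex ey] et] :=
  ginj _ _ _ _ (gAA _ _ (rA _ A'x) (rA _ A'y)) (tagA _ _)
               (gAA _ _ (rA _ A'x') (rA _ A'y')) (tagA _ _) e.
have [bx b_y] := tag_inj nxy nxy' et.
by split; apply: retract_inj.
Qed.

Lemma pairing_on_extend : exists2 g', pairing_on A' g' &
  forall x y, A x -> A y -> g' x y = g x y.
Proof.
pose g' x y := if `[< A x >] && `[< A y >] then g x y else h (code x y).
have hcodeN x y : A' x -> A' y -> ~ A (h (code x y)).
  by move=> A'x A'y; apply: hA; apply: codeA.
exists g'; last by move=> x y Ax Ay; rewrite /g' !asboolT.
split=> [x y A'x A'y|x y x' y' A'x A'y A'x' A'y'].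
  rewrite /g'; case: ifP => [/andP[/asboolP Ax /asboolP Ay]|_].
    by left; apply: gA.1.
  by right; exists (code x y) => //; apply: codeA.
rewrite /g'; case: ifP => [/andP[/asboolP Ax /asboolP Ay]|/negbT nxy];
  case: ifP => [/andP[/asboolP Ax' /asboolP Ay']|/negbT nxy'].
- exact: gA.2.
- by move=> e; case: (hcodeN x' y') => //; rewrite -e; apply: gA.1.
- by move=> e; case: (hcodeN x y) => //; rewrite e; apply: gA.1.
- by move/hi; rewrite !inE => /(_ (codeA A'x A'y) (codeA A'x' A'y')); apply: code_inj.
Qed.

End Extension.

Section Maximal.
Variable base : set K.

Record partial_pairing := PartialPairing {
  pdom : set K; pfun : K -> K -> K;
  pdom_base : base `<=` pdom; pfunP : pairing_on pdom pfun }.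

Definition pairing_le (p q : partial_pairing) : bool := `[< pdom p `<=` pdom q /\
  forall x y, pdom p x -> pdom p y -> pfun p x y = pfun q x y >].

Lemma pairing_chain_bound (C : set partial_pairing) :
  C !=set0 -> total_on C pairing_le -> exists q, forall p, C p -> pairing_le p q.
Proof.
move=> [c0 Cc0] Ctot.
have common p q : C p -> C q ->
    exists2 r, C r & pdom p `<=` pdom r /\ pdom q `<=` pdom r.
  move=> Cp Cq; have [/asboolP[pq _]|/asboolP[qp _]] := Ctot _ _ Cp Cq.
    by exists q => //; split.
  by exists p => //; split.
pose D := \bigcup_(p in C) pdom p.
have both x y : D x -> D y -> exists2 p, C p & pdom p x /\ pdom p y.
  move=> [p Cp px] [q Cq qy]; have [r Cr [pr qr]] := common _ _ Cp Cq.
  by exists r => //; split; [apply: pr|apply: qr].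
have pick x y : {p : partial_pairing |
    (exists2 q, C q & pdom q x /\ pdom q y) -> C p /\ pdom p x /\ pdom p y}.
  apply: cid.
  have [[p Cp pxy]|nex] := pselect (exists2 q, C q & pdom q x /\ pdom q y).
    by exists p.
  by exists c0 => /nex.
pose h x y := pfun (sval (pick x y)) x y.
have hE p x y : C p -> pdom p x -> pdom p y -> h x y = pfun p x y.
  move=> Cp px py; rewrite /h; case: (pick x y) => q /=.
  case=> [|Cq [qx qy]]; first by exists p.
  have [/asboolP[_ e]|/asboolP[_ e]] := Ctot _ _ Cq Cp; first exact: e.
  by rewrite e.
have Dbase : base `<=` D by move=> x bx; exists c0 => //; apply: pdom_base.
have hP : pairing_on D h.
  split=> [x y Dx Dy|x y x' y' Dx Dy Dx' Dy'].
    have [p Cp [px py]] := both _ _ Dx Dy.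
    by rewrite (hE p) //; exists p => //; apply: (pfunP p).1.
  have [p Cp [px py]] := both _ _ Dx Dy; have [q Cq [qx qy]] := both _ _ Dx' Dy'.
  have [r Cr [pr qr]] := common _ _ Cp Cq.
  have [rx ry rx' ry'] : [/\ pdom r x, pdom r y, pdom r x' & pdom r y'].
    by split; [apply: pr|apply: pr|apply: qr|apply: qr].
  by rewrite !(hE r) //; apply: (pfunP r).2.
exists (PartialPairing Dbase hP) => p Cp; apply/asboolP; split=> /=.
  by move=> x px; exists p.
by move=> x y px py; rewrite (hE p).
Qed.

Lemma pairing_maximal (p0 : partial_pairing) : exists m, premaximal pairing_le m.
Proof.
apply: (ZL_preorder p0).
- by move=> p; apply/asboolP; split.
- move=> p q r /asboolP[pq epq] /asboolP[qr eqr]; apply/asboolP; split.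
    exact: subset_trans qr.
  by move=> x y px py; rewrite epq // eqr //; apply: pq.
- move=> C Ctot; have [->|/set0P C0] := eqVneq C set0; first by exists p0.
  exact: pairing_chain_bound C0 Ctot.
Qed.

End Maximal.

Lemma infinite_nat_inj : infinite_set [set: K] -> exists i : nat -> K, injective i.
Proof.
move=> /infiniteP/card_le_injP[/seteqP[/(_ 0%N I) //]|[i _ ii]].
by exists i => m n; apply: ii; rewrite inE.
Qed.

Lemma pairing_of_compl_le (A : set K) g k1 k2 : pairing_on A g ->
  A k1 -> A k2 -> k1 <> k2 -> ~` A #<= A -> exists p : K * K -> K, injective p.
Proof.
move=> [gA gi] Ak1 Ak2 k12 cA.
have [j jA ji] : exists2 j : K -> K, set_fun (~` A) A j & set_inj (~` A) j.
  case/card_le_injP: cA => [A0|//]; exists id => [x|x y]; rewrite ?inE A0 => -[].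
pose phi x := if `[< A x >] then g x k1 else g (j x) k2.
have phiA x : A (phi x).
  rewrite /phi; case: (pselect (A x)) => [Ax|nAx].
    by rewrite asboolT //; apply: gA.
  by rewrite asboolF //; apply: gA => //; apply: jA.
have phi_inj : injective phi.
  move=> x y; rewrite /phi.
  case: (pselect (A x)) => [Ax|nAx]; case: (pselect (A y)) => [Ay|nAy].
  - by rewrite !asboolT // => /(gi _ _ _ _ Ax Ak1 Ay Ak1)[].
  - by rewrite asboolT // asboolF // => /(gi _ _ _ _ Ax Ak1 (jA _ nAy) Ak2)[_ /k12].
  - rewrite asboolF // asboolT //.
    by move=> /(gi _ _ _ _ (jA _ nAx) Ak2 Ay Ak1)[_ /esym/k12].
  - rewrite !asboolF // => /(gi _ _ _ _ (jA _ nAx) Ak2 (jA _ nAy) Ak2)[e _].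
    by apply: ji; rewrite ?inE.
exists (fun p => g (phi p.1) (phi p.2)) => -[a b] [c d] /=.
by move=> /(gi _ _ _ _ (phiA a) (phiA b) (phiA c) (phiA d))[/phi_inj -> /phi_inj ->].
Qed.

(* A maximal partial pairing has [~` A #<= A]: otherwise [pairing_on_extend] enlarges it. *)
Theorem infinite_pairing : infinite_set [set: K] -> exists p : K * K -> K, injective p.
Proof.
move=> /infinite_nat_inj[i ii].
have invK : cancel i ('pinv_(fun=> 0%N) [set: nat] i).
  by move=> n; have /= := pinvKV (fun=> 0%N) (in2W ii) (mem_set (I : [set: nat] n)).
pose inv := 'pinv_(fun=> 0%N) [set: nat] i.
pose g0 x y := i (pickle (inv x, inv y)).
have g0P : pairing_on (range i) g0.
  split=> [x y _ _|_ _ _ _ [m _ <-] [n _ <-] [m' _ <-] [n' _ <-]]; first exact: imageT.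
  by move/ii/(pcan_inj pickleK); rewrite /inv !invK => -[-> ->].
have [m mmax] := pairing_maximal (PartialPairing (@subset_refl _ (range i)) g0P).
have iA n : pdom m (i n) by apply: pdom_base; exists n.
have [i01 i02 i12] : [/\ i 0%N <> i 1%N, i 0%N <> i 2%N & i 1%N <> i 2%N].
  by split=> /ii.
have [] := card_le_total (~` pdom m) (pdom m); last first.
  move=> /card_le_injP[A0|[h hA hi]]; first by move: (iA 0%N); rewrite A0.
  have [g' g'P g'E] := pairing_on_extend (pfunP m) (iA 0%N) (iA 1%N) (iA 2%N)
    i01 i02 i12 hA hi.
  have base' : range i `<=` pdom m `|` h @` pdom m by move=> x /(pdom_base m) ?; left.
  have /asboolP[sub _] : pairing_le (PartialPairing base' g'P) m.
    by apply: mmax; apply/asboolP; split=> [x Ax|x y Ax Ay] /=; [left|rewrite g'E].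
  by exfalso; apply: (hA _ (iA 0%N)); apply: sub; right; exists (i 0%N).
exact: pairing_of_compl_le (pfunP m) (iA 0%N) (iA 1%N) i01.
Qed.

End Pairing.

Section InfiniteCardinal.
Variable K : Type.
Hypothesis Kinf : infinite_set [set: K].

Lemma card_le_bigcup T U (X : set T) (Y : T -> set U) :
  X #<= [set: K] -> (forall x, X x -> Y x #<= [set: K]) ->
  \bigcup_(x in X) Y x #<= [set: K].
Proof.
have [->|/set0P[x0 Xx0]] := eqVneq X set0.
  by rewrite bigcup_set0 => _ _; apply: card_ge0.
move=> /card_le_injP[X0|[io _ ioi]] YK; first by move: Xx0; rewrite X0.
have [p pinj] := infinite_pairing Kinf.
have [k0 _] := infinite_setN0 Kinf.
have jx x : {j : U -> K | X x -> set_inj (Y x) j}.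
  apply: cid; have [Xx|nXx] := pselect (X x); last by exists (fun=> k0).
  have /card_le_injP[Y0|[j _ ji]] := YK x Xx; last by exists j.
  by exists (fun=> k0) => _ u v; rewrite Y0 inE.
have xu u : {x | (\bigcup_(x in X) Y x) u -> X x /\ Y x u}.
  apply: cid; have [[x Xx Yu]|nu] := pselect ((\bigcup_(x in X) Y x) u).
    by exists x.
  by exists x0 => /nu.
pose xo u := sval (xu u); pose j x := sval (jx x).
apply: (card_le_inj (f := fun u => p (io (xo u), j (xo u) u))) => // u v.
move=> /set_mem Uu /set_mem Uv.
have [Xu Yu] := svalP (xu u) Uu; have [Xv Yv] := svalP (xu v) Uv.
move=> /pinj[/ioi e1 e2]; move: e1; rewrite !inE => /(_ Xu Xv) e.
have Yv' : Y (xo u) v by rewrite e.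
rewrite /j -e in e2.
exact: (svalP (jx (xo u)) Xu) _ _ (mem_set Yu) (mem_set Yv') e2.
Qed.

Lemma card_le_countable_bigcup U (Y : nat -> set U) :
  (forall n, Y n #<= [set: K]) -> \bigcup_(n in [set: nat]) Y n #<= [set: K].
Proof. by move=> YK; apply: card_le_bigcup => //; apply/infiniteP. Qed.

Lemma card_le_setU T (A B : set T) :
  A #<= [set: K] -> B #<= [set: K] -> A `|` B #<= [set: K].
Proof.
move=> AK BK; have -> : A `|` B = \bigcup_(b in [set: bool]) (if b then A else B).
  apply/seteqP; split=> [x [Ax|Bx]|x [[] _ ?]];
    by [exists true|exists false|left|right].
apply: card_le_bigcup; last by case.
apply: card_le_trans (countableP [set: bool]) _; exact/infiniteP.
Qed.

Lemma card_le_set1 T (x : T) : [set x] #<= [set: K].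
Proof.
have [k0 _] := infinite_setN0 Kinf.
by apply: (card_le_inj (f := fun=> k0)) => // u v; rewrite !inE => -> ->.
Qed.

End InfiniteCardinal.

Section SuccessorCardinal.
Variables K V : Type.
Hypotheses (Kinf : infinite_set [set: K]) (KV : is_succ_card K V).

Lemma succ_card_nle : ~ ([set: V] #<= [set: K]).
Proof. by case: KV => _ []. Qed.

Lemma succ_card_dichotomy W (S : set W) :
  S #<= [set: V] -> S #<= [set: K] \/ S #= [set: V].
Proof.
case: KV => _ [_ small] /card_le_injP[->|[h _ hi]]; first by left; apply: card_ge0.
have hS := inj_card_eq hi.
case: (small (h @` S)) => [hK|hV]; [left|right].
  by rewrite -(card_le_eql hS).
by rewrite -(card_eql hS).
Qed.

Lemma succ_card_eqP W (S : set W) :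
  S #<= [set: V] -> S #= [set: V] <-> ~ (S #<= [set: K]).
Proof.
move=> SV; split; last by case: (succ_card_dichotomy SV).
by move=> SV' SK; apply: succ_card_nle; rewrite -(card_le_eql SV').
Qed.

Lemma succ_card_compl (S : set V) : S #<= [set: K] ->
  exists2 D, D `<=` ~` S & D #= [set: K].
Proof.
move=> SK; have nSK : ~ (~` S #<= [set: K]).
  by move=> nSK; apply: succ_card_nle; rewrite -(setUv S); apply: card_le_setU.
have [//|SV] := succ_card_dichotomy (card_leT (~` S)).
have /card_le_injP[K0|[h hS hi]] : [set: K] #<= ~` S.
  by rewrite (card_le_eqr SV); case: KV.
by have [k] := infinite_setN0 Kinf; rewrite K0.
by exists (h @` setT); [move=> _ [k _ <-]; apply: hS|apply: inj_card_eq].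
Qed.

End SuccessorCardinal.

Lemma wf_fixpoint_sets I (lt : I -> I -> Prop) V (G : set V -> I -> set V) :
  well_founded lt ->
  exists Cf : I -> set V, forall b, Cf b = G (\bigcup_(g in [set g | lt g b]) Cf g) b.
Proof.
move=> wf; exists (Fix wf (fun _ => set V)
  (fun b rec => G (fun v => exists g (h : lt g b), rec g h v) b)) => b.
rewrite Fix_eq; last first.
  move=> x f1 f2 e; congr G; apply/funext => v; apply/propext.
  by split=> -[g [h]]; [rewrite e|rewrite -e]; exists g, h.
congr G; apply/funext => v; apply/propext.
by split=> [[g [h r]]|[g h r]]; [exists g|exists g, h].
Qed.

Section StrictWellOrder.
Variables (I : Type) (lt : I -> I -> Prop).
Hypothesis lt_wo : strict_wellorder lt.

Lemma wo_min (P : I -> Prop) : (exists x, P x) ->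
  exists2 x, P x & forall y, lt y x -> ~ P y.
Proof.
case: lt_wo => _ [_ [_ wf]] [x Px]; apply: contrapT => nmin; move: Px.
by elim/(well_founded_ind wf): x => x IH Px; apply: nmin; exists x => // y /IH.
Qed.

Lemma succ_of_unique a b b' : is_succ_of lt a b -> is_succ_of lt a b' -> b = b'.
Proof.
case: lt_wo => irr [tr _] [ab h] [ab' h'].
case: (h _ ab') => // bb'; case: (h' _ ab) => // b'b.
by case: (irr b); apply: tr bb' b'b.
Qed.

Lemma least_nlt z a : is_least lt z -> ~ lt a z.
Proof.
case: lt_wo => irr [tr _] zl az; have [e|ne] := pselect (a = z).
  by rewrite e in az; case: (irr z).
by case: (irr a); apply: tr az (zl a ne).
Qed.

Lemma limit_between a l : is_limit lt l -> lt a l -> exists2 b, lt a b & lt b l.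
Proof.
case: lt_wo => irr [tr [tri _]] [_ nsucc] al.
apply: contrapT => nb; apply: nsucc; exists a; split=> // c ac.
case: (tri c l) => [cl|[->|lc]]; [|by left|by right].
by case: nb; exists c.
Qed.

Section StagesBigcup.
Variables (V : Type) (Cf : I -> set V).
Let A b := \bigcup_(g in [set g | lt g b]) Cf g.

Lemma increasing_continuous_bigcup : increasing_continuous lt A.
Proof.
case: lt_wo => _ [tr _]; split.
  by move=> a b ab x [g ga Cg]; exists g => //; apply: tr ga ab.
move=> l ll; apply/seteqP; split=> [x [g gl Cg]|x [a al [g ga Cg]]].
  by have [b gb bl] := limit_between ll gl; exists b => //; exists g.
by exists g => //; apply: tr ga al.
Qed.

Lemma bigcup_lt_least z : is_least lt z -> A z = set0.
Proof. by move=> zl; apply/seteqP; split=> // x [g /(least_nlt zl)]. Qed.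

Lemma bigcup_lt_succ a b : (forall c, A c `<=` Cf c) -> is_succ_of lt a b ->
  A b = Cf a.
Proof.
case: lt_wo => irr [tr [tri _]] ACf [ab ac]; apply/seteqP; split; last by exists a.
move=> x [g gb Cg]; case: (tri g a) => [ga|[<- //|ag]].
  by apply: ACf; exists g.
by case: (irr g); case: (ac _ ag) => [eb|bg]; [rewrite {2}eb|apply: tr gb bg].
Qed.

End StagesBigcup.

Lemma entry_at_succ V (A : I -> set V) x m :
  increasing_continuous lt A -> (forall z, is_least lt z -> A z = set0) ->
  A m x -> exists a b, [/\ is_succ_of lt a b, A b x & ~ A a x].
Proof.
move=> [_ Acont] Aleast Amx.
have [b Abx bmin] := wo_min (ex_intro (fun c => A c x) m Amx).
have [[a ab]|nsucc] := pselect (exists a, is_succ_of lt a b).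
  by exists a, b; split=> //; apply: bmin; case: ab.
have [bl|nbl] := pselect (is_least lt b); first by move: Abx; rewrite Aleast.
by move: Abx; rewrite Acont //; case=> a ab Aax; case: (bmin a ab).
Qed.

End StrictWellOrder.

Section SuccessorOrdinal.
Variables (K V I : Type) (lt : I -> I -> Prop).
Hypotheses (Kinf : infinite_set [set: K]) (KV : is_succ_card K V).
Hypothesis ord : ordinal_succ_card K V lt.

Lemma ordinal_nle : ~ ([set: I] #<= [set: K]).
Proof.
have [_ [IV _]] := ord; move=> IK; apply: (succ_card_nle KV).
by rewrite -(card_le_eql IV).
Qed.

Lemma ordinal_tail_nle a : ~ ([set b | ~ lt b a] #<= [set: K]).
Proof.
have [_ [_ segK]] := ord; move=> tK; apply: ordinal_nle.
rewrite -(setUv [set b | lt b a]); exact: card_le_setU.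
Qed.

Lemma ordinal_succ_exists a : exists b, is_succ_of lt a b.
Proof.
have [lt_wo _] := ord; have [irr [tr [tri _]]] := lt_wo.
have [b ab bmin] : exists2 b, lt a b & forall c, lt c b -> ~ lt a c.
  apply: wo_min => //; apply: contrapT => nex; apply: (@ordinal_tail_nle a).
  apply: card_le_trans _ (card_le_set1 Kinf a); apply: subset_card_le => b nba.
  by case: (tri b a) => [//|[//|ab]]; case: nex; exists b.
exists b; split=> // c ac; case: (tri c b) => [cb|[->|bc]]; [|by left|by right].
by case: (bmin c cb).
Qed.

End SuccessorOrdinal.

Definition nbhd V (F : set (set V)) (x : V) := [set y | F [set x; y]].

Lemma set2_inj V (x y y' : V) : [set x; y] = [set x; y'] -> y = y'.
Proof.
move=> e; have : [set x; y'] y by rewrite -e; right.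
case=> [yx|//]; have : [set x; y] y' by rewrite e; right.
by case=> ->.
Qed.

Lemma inc_nbhd V (F : set (set V)) x : (forall e, F e -> is_edge e) ->
  inc F x = (fun y => [set x; y]) @` nbhd F x.
Proof.
move=> Fedge; apply/seteqP; split=> [e [Fe ex]|_ [y Fxy <-]]; last first.
  by split=> //; left.
have [a [b [_ eab]]] := Fedge e Fe; rewrite eab in Fe ex *.
by case: ex => ->; [exists b|exists a; rewrite // /nbhd /= setUC].
Qed.

Lemma card_inc_nbhd V (F : set (set V)) x : (forall e, F e -> is_edge e) ->
  inc F x #= nbhd F x.
Proof.
by move=> Fedge; rewrite inc_nbhd //; apply: inj_card_eq => y y' _ _; apply: set2_inj.
Qed.

Section Saturation.
Variables (V : Type) (N : V -> set V).

Definition saturate (T : set V) :=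
  \bigcup_(n in [set: nat]) iter n (fun X => X `|` \bigcup_(x in X) N x) T.

Lemma saturate_sub T : T `<=` saturate T.
Proof. by move=> x Tx; exists 0%N. Qed.

Lemma saturate_closed T x : saturate T x -> N x `<=` saturate T.
Proof. by move=> [n _ xn] y Nxy; exists n.+1 => //=; right; exists x. Qed.

Lemma card_le_saturate K T : infinite_set [set: K] ->
  (forall x, N x #<= [set: K]) -> T #<= [set: K] -> saturate T #<= [set: K].
Proof.
move=> Kinf NK TK; apply: card_le_countable_bigcup => // n.
elim: n => [//|n IH] /=; apply: card_le_setU => //.
exact: card_le_bigcup.
Qed.

End Saturation.

Section Degrees.
Variables (K V C : Type) (E : set (set V)) (f : V -> set C).
Hypotheses (KV : is_succ_card K V) (EC : classC E f).

Lemma card_inc_le (F : set (set V)) x : F `<=` E -> inc F x #<= [set: V].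
Proof.
move=> FE; have [_ Eedge] := EC.1.
by rewrite (card_le_eql (card_inc_nbhd x (fun e Fe => Eedge e (FE e Fe)))) card_leT.
Qed.

Lemma card_deg_le x : f x #<= [set: V].
Proof. exact: card_le_trans (EC.2 x) (card_inc_le x (@subset_refl _ E)). Qed.

Lemma deg_bigP x : f x #= [set: V] <-> ~ (f x #<= [set: K]).
Proof. exact: (succ_card_eqP KV (card_deg_le x)). Qed.

End Degrees.

Section Stage.
Variables (K V C : Type) (E : set (set V)) (f : V -> set C) (F : set (set V)).
Hypotheses (KV : is_succ_card K V) (EC : classC E f).
Hypothesis Fperf : perfect_factor [set: V] E f F.

Lemma stage_kperfect_factor (S T : set V) :
  (forall x, T x -> f x #<= [set: K] -> nbhd F x `<=` T) ->
  (forall x, S x -> f x #<= [set: K] -> nbhd F x `<=` S) ->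
  (forall x, T x -> ~ (f x #<= [set: K]) -> exists2 y, nbhd F x y & T y /\ ~ S y) ->
  let D := T `\` S in
  let B := T `\` (S `\` [set x | f x #= [set: V]]) in
  exists F', @kperfect_factor V C K B
    [set e | E e /\ exists x y, e = [set x; y] /\ B x /\ D y] f F'.
Proof.
move=> Tclosed Sclosed Tbig D B; have [[FE _] Fdeg] := Fperf.
have Fedge e : F e -> is_edge e by move=> Fe; apply: EC.1.2; apply: FE.
pose F' := [set e | F e /\ exists x y, e = [set x; y] /\ B x /\ D y].
exists F'; split.
  split=> [e [Fe Be]|x _]; first by split=> //; apply: FE.
  rewrite -(card_le_eqr (Fdeg x I)); apply: subset_card_le => e [[]].
  by split.
move=> x [Tx nSx]; split=> [xsmall|xbig].
  have xD : D x.
    split=> // Sx; apply: nSx; split=> //; apply/(deg_bigP KV EC).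
    by rewrite /= ?xsmall.
  suff -> : inc F' x = inc F x by apply: Fdeg.
  apply/seteqP; split=> [e [[Fe _] ex]//|e [Fe ex]].
  split=> //; split=> //.
  have : inc F x e by [].
  rewrite (inc_nbhd x Fedge) => -[y Fxy exy]; rewrite -exy in Fe ex *.
  exists y, x; split; first by rewrite setUC.
  split=> //; split; first exact: Tclosed Fxy.
  case=> Sy /(deg_bigP KV EC)/contrapT ysmall; apply: (proj2 xD).
  by apply: (Sclosed y Sy ysmall x); rewrite /nbhd /= setUC.
have [y Fxy [Ty nSy]] := Tbig x Tx xbig.
by exists [set x; y]; split; [split=> //; exists x, y|left].
Qed.

End Stage.

Definition factor_filtration (K V C I : Type) (lt : I -> I -> Prop)
    (E : set (set V)) (f : V -> set C) (A : I -> set V) :=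
  increasing_continuous lt A /\
  (forall z, is_least lt z -> A z = set0) /\
  (\bigcup_(a in [set: I]) A a = [set: V]) /\
  (forall a b, is_succ_of lt a b -> A b `\` A a #= [set: K]) /\
  (forall a b, is_succ_of lt a b ->
     let D := A b `\` A a in
     let B := A b `\` (A a `\` [set x | f x #= [set: V]]) in
     exists F, @kperfect_factor V C K B
       [set e | E e /\ exists x y, e = [set x; y] /\ B x /\ D y] f F).

Section Forward.
Variables (K V C I : Type) (lt : I -> I -> Prop) (E : set (set V)) (f : V -> set C).
Hypotheses (Kinf : infinite_set [set: K]) (KV : is_succ_card K V).
Hypotheses (ord : ordinal_succ_card K V lt) (EC : classC E f).
Variable F : set (set V).
Hypothesis Fperf : perfect_factor [set: V] E f F.

(* [T] can serve as the stage A_(a+1) following the stage A_a = [A]. *)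
Definition stage (A T : set V) :=
  [/\ A `<=` T, T #<= [set: K],
      forall x, T x -> f x #<= [set: K] -> nbhd F x `<=` T,
      forall x, T x -> ~ (f x #<= [set: K]) -> exists2 y, nbhd F x y & T y /\ ~ A y
    & exists2 D, D `<=` T `\` A & D #= [set: K]].

Lemma exists_new_nbr (S : set V) x :
  exists y, (exists y, nbhd F x y /\ ~ S y) -> nbhd F x y /\ ~ S y.
Proof.
have [[y ?]|nex] := pselect (exists y, nbhd F x y /\ ~ S y); first by exists y.
by exists x => /nex.
Qed.

Definition new_nbr (S : set V) x := sval (cid (exists_new_nbr S x)).

Lemma exists_new_set (S : set V) :
  exists D, S #<= [set: K] -> D `<=` ~` S /\ D #= [set: K].
Proof.
have [SK|nSK] := pselect (S #<= [set: K]); last by exists S.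
by have [D DS DK] := succ_card_compl Kinf KV SK; exists D.
Qed.

Definition new_set (S : set V) := sval (cid (exists_new_set S)).

Definition next_nbrs (S : set V) x :=
  if `[< f x #<= [set: K] >] then nbhd F x else [set new_nbr S x].

Definition next_stage (S X : set V) :=
  saturate (next_nbrs S) (S `|` new_set S `|` X).

Lemma nbhd_deg x : nbhd F x #= f x.
Proof.
have [[FE _] Fdeg] := Fperf.
have Fedge e : F e -> is_edge e by move=> Fe; apply: EC.1.2; apply: FE.
exact: card_eq_trans (card_esym (card_inc_nbhd x Fedge)) (Fdeg x Logic.I).
Qed.

Lemma next_stageP (S X : set V) : S #<= [set: K] -> X #<= [set: K] ->
  stage S (next_stage S X).
Proof.
move=> SK XK; have [newS newK] := svalP (cid (exists_new_set S)) SK.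
have seedT : S `|` new_set S `|` X `<=` next_stage S X by apply: saturate_sub.
have NT x : next_stage S X x -> next_nbrs S x `<=` next_stage S X.
  exact: saturate_closed.
split.
- by move=> x Sx; apply: seedT; left; left.
- apply: card_le_saturate => //; last first.
    by apply: card_le_setU => //; apply: card_le_setU => //; rewrite (card_le_eql newK).
  move=> x; rewrite /next_nbrs; case: (pselect (f x #<= [set: K])) => [xs|xb].
    by rewrite asboolT // (card_le_eql (nbhd_deg x)).
  by rewrite asboolF //; apply: card_le_set1.
- by move=> x Tx xs; move: (NT x Tx); rewrite /next_nbrs asboolT.
- move=> x Tx xb; have ex : exists y, nbhd F x y /\ ~ S y.
    apply: contrapT => nex; apply: xb; rewrite -(card_le_eql (nbhd_deg x)).
    apply: card_le_trans _ SK; apply: subset_card_le => y nxy.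
    by apply: contrapT => nSy; apply: nex; exists y.
  have [nxy nSy] := svalP (cid (exists_new_nbr S x)) ex.
  exists (new_nbr S x) => //; split=> //.
  by apply: (NT x Tx); rewrite /next_nbrs asboolF.
- by exists (new_set S) => // y Dy; split; [apply: seedT; left; right|apply: newS].
Qed.

Lemma exists_stages : exists Cf : I -> set V,
  (forall b, stage (\bigcup_(g in [set g | lt g b]) Cf g) (Cf b)) /\
  forall x, exists b, Cf b x.
Proof.
have [gI gIi] : exists gI : V -> I, injective gI.
  have [_ [IV _]] := ord.
  have /card_le_injP[V0|[gI _ gIi]] : [set: V] #<= [set: I] by rewrite (card_le_eqr IV).
    by have [v _] := EC.1.1; have : [set: V] v by []; rewrite V0.
  by exists gI => u v; apply: gIi; rewrite inE.
have fiberK b : [set x | gI x = b] #<= [set: K].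
  have [k0 _] := infinite_setN0 Kinf.
  apply: (card_le_inj (f := fun=> k0)) => // u v; rewrite !inE => eu ev _.
  by apply: gIi; rewrite eu ev.
have [[_ [_ [_ wf]]] _] := ord.
have [Cf CfE] := wf_fixpoint_sets (fun S b => next_stage S [set x | gI x = b]) wf.
have Cst b : stage (\bigcup_(g in [set g | lt g b]) Cf g) (Cf b).
  elim/(well_founded_ind wf): b => b IH; rewrite CfE; apply: next_stageP => //.
  by apply: (card_le_bigcup Kinf (ord.2.2 b)) => g /IH[].

exists Cf; split=> // x; exists (gI x).
by rewrite CfE; apply: saturate_sub; right.
Qed.

Lemma perfect_factor_filtration : exists A, factor_filtration K lt E f A.
Proof.
have [Cf [Cst cover]] := exists_stages; have [lt_wo _] := ord.
pose A b := \bigcup_(g in [set g | lt g b]) Cf g.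
have Asucc a b : is_succ_of lt a b -> A b = Cf a.
  by apply: bigcup_lt_succ => // c; case: (Cst c).
exists A; split; first exact: increasing_continuous_bigcup.
split; first exact: bigcup_lt_least.
split.
  apply/seteqP; split=> // x _; have [b Cbx] := cover x.
  have [c bc] := ordinal_succ_exists Kinf KV ord b.
  by exists c => //; rewrite (Asucc _ _ bc).
split=> a b ab; rewrite (Asucc _ _ ab); have [_ CK Cclosed Cbig [D DC DK]] := Cst a.
  apply/card_eqPle; split.
    by apply: card_le_trans CK; apply: subset_card_le => x [].
  by rewrite -(card_le_eql DK); apply: subset_card_le.
apply: (stage_kperfect_factor KV EC Fperf) Cclosed _ Cbig.
move=> x [g ga Cgx] xs y nxy; exists g => //.
by have [_ _ Cgclosed _ _] := Cst g; apply: Cgclosed nxy.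
Qed.

End Forward.

Section Backward.
Variables (K V C I : Type) (lt : I -> I -> Prop) (E : set (set V)) (f : V -> set C).
Hypotheses (Kinf : infinite_set [set: K]) (KV : is_succ_card K V).
Hypotheses (ord : ordinal_succ_card K V lt) (EC : classC E f).
Variable A : I -> set V.
Hypothesis Afil : factor_filtration K lt E f A.

Let lt_wo : strict_wellorder lt := ord.1.
Let s a := sval (cid (ordinal_succ_exists Kinf KV ord a)).
Let sP a : is_succ_of lt a (s a) := svalP (cid (ordinal_succ_exists Kinf KV ord a)).
Let D a := A (s a) `\` A a.
Let B a := A (s a) `\` (A a `\` [set x | f x #= [set: V]]).
Let Ea a := [set e | E e /\ exists x y, e = [set x; y] /\ B a x /\ D a y].
Let Fa a := sval (cid (Afil.2.2.2.2 a (s a) (sP a))).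
Let FaP a : @kperfect_factor V C K (B a) (Ea a) f (Fa a) :=
  svalP (cid (Afil.2.2.2.2 a (s a) (sP a))).

Let A_succ_le a c : lt a c -> A (s a) `<=` A c.
Proof.
move=> ac; case: ((sP a).2 _ ac) => [<- //|sac].
exact: Afil.1.1.
Qed.

Let D_unique a a' x : D a x -> D a' x -> a = a'.
Proof.
have [_ [_ [tri _]]] := lt_wo.
move=> [Ax nAx] [Ax' nAx']; case: (tri a a') => [aa'|[//|a'a]].
  by case: nAx'; apply: (A_succ_le aa').
by case: nAx; apply: (A_succ_le a'a).
Qed.

Let D_cover x : exists a, D a x.
Proof.
have [m _ Amx] : (\bigcup_(a in [set: I]) A a) x by rewrite Afil.2.2.1.
have [a [b [ab Abx nAax]]] := entry_at_succ lt_wo Afil.1 Afil.2.1 Amx.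
by exists a; split=> //; rewrite (succ_of_unique lt_wo (sP a) ab).
Qed.

Let Ea_sub a e : Ea a e -> e `<=` A (s a) /\ exists2 y, e y & D a y.
Proof.
move=> [_ [x [y [-> [[Bx _] Dy]]]]]; split; first by move=> z [->|->] //; case: Dy.
by exists y => //; right.
Qed.

Let Ea_unique a a' e : Ea a e -> Ea a' e -> a = a'.
Proof.
have [_ [_ [tri _]]] := lt_wo.
move=> /Ea_sub[eA [y ey [_ nAy]]] /Ea_sub[eA' [y' ey' [_ nAy']]].
case: (tri a a') => [aa'|[//|a'a]].
  by case: nAy'; apply: (A_succ_le aa'); apply: eA.
by case: nAy; apply: (A_succ_le a'a); apply: eA'.
Qed.

Let F := \bigcup_(a in [set: I]) Fa a.

Let FE : F `<=` E.
Proof. by move=> e [a _ /(FaP a).1.1[]]. Qed.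

Let inc_small x : f x #<= [set: K] -> inc F x #= f x.
Proof.
move=> xs; have [a Dax] := D_cover x.
have Bax : B a x by case: Dax => Ax nAx; split=> // -[].
suff -> : inc F x = inc (Fa a) x by have [_ /(_ x Bax)[/(_ xs)]] := FaP a.
apply/seteqP; split=> [e [[a' _ Fe] ex]|e [Fe ex]]; last by split=> //; exists a.
split=> //; suff <- : a' = a by [].
have [_ [x' [y' [ee [[Ax' nBx'] Dy']]]]] := (FaP a').1.1 _ Fe.
move: ex; rewrite ee => -[xx'|xy']; last first.
  by apply
: (D_unique (x := x)) => //; rewrite xy'.

apply: (D_unique (x := x)) => //; rewrite xx'; split=> // Ax.
by apply: nBx'; split=> //; rewrite -xx' => /(deg_bigP KV EC).
Qed.

Let inc_big x : ~ (f x #<= [set: K]) -> inc F x #= f x.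
Proof.
move=> xb; have [a Dax] := D_cover x.
have [irr [tr [tri _]]] := lt_wo.
have incV : inc F x #<= [set: V] := card_inc_le EC x FE.
have Bx a' : ~ lt a' a -> B a' x.
  move=> na'a; split; last by case=> _; apply; apply/(deg_bigP KV EC).
  case: (tri a' a) => [//|[->|aa']]; first by case: Dax.
  exact: Afil.1.1 _ _ (sP a').1 _ (A_succ_le aa' (proj1 Dax)).

have ex a' : {e | ~ lt a' a -> Fa a' e /\ e x}.
  apply: cid; have [aa'|na'a] := pselect (lt a' a); first by exists set0.
  by have [_ /(_ x (Bx a' na'a))[_ /(_ xb)[e []]]] := FaP a'; exists e.
have tail_inc : [set a' | ~ lt a' a] #<= inc F x.
  apply: (card_le_inj (f := fun a' => sval (ex a'))) => [a' na'a|a1 a2].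
    by have [Fe ex'] := svalP (ex a') na'a; split=> //; exists a'.
  rewrite !inE => n1 n2 e12; have [F1 _] := svalP (ex a1) n1.
  have [F2 _] := svalP (ex a2) n2; rewrite -e12 in F2.
  exact: Ea_unique ((FaP a1).1.1 _ F1) ((FaP a2).1.1 _ F2).
have /(succ_card_eqP KV incV) incV' : ~ (inc F x #<= [set: K]).
  move=> incK; apply: (ordinal_tail_nle Kinf KV ord (a := a)).
  exact: card_le_trans incK.

exact: card_eq_trans incV' (card_esym (proj2 (deg_bigP KV EC x) xb)).
Qed.

Lemma filtration_perfect_factor : exists F, perfect_factor [set: V] E f F.
Proof.
have Fdeg x : inc F x #= f x.
  by have [/inc_small|/inc_big] := pselect (f x #<= [set: K]).
exists F; split=> [|x _]; last exact: Fdeg.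
by split=> // x _; have /card_eqPle[] := Fdeg x.
Qed.

End Backward.

Theorem theorem3 (K V C I : Type) (lt : I -> I -> Prop)
  (E : set (set V)) (f : V -> set C) :
  infinite_set [set: K] ->
  is_succ_card K V ->
  ordinal_succ_card K V lt ->
  classC E f ->
  (exists F, perfect_factor [set: V] E f F) <->
  (exists A : I -> set V,
     increasing_continuous lt A /\
     (forall z, is_least lt z -> A z = set0) /\
     (\bigcup_(a in [set: I]) A a = [set: V]) /\
     (forall a b, is_succ_of lt a b -> A b `\` A a #= [set: K]) /\
     (forall a b, is_succ_of lt a b ->
        let D := A b `\` A a in
        let B := A b `\` (A a `\` [set x | f x #= [set: V]]) in
        exists F, @kperfect_factor V C K B
          [set e | E e /\ exists x y, e = [set x; y] /\ B x /\ D y] f F)).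
Proof.
move=> Kinf KV ord EC; split=> [[F Fperf]|[A Afil]].
  exact: (perfect_factor_filtration Kinf KV ord EC Fperf).
exact: (filtration_perfect_factor Kinf KV ord EC Afil).
Qed.
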